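(* Let $K_1$ and $K_2$ be flag simplicial complexes. Suppose that: (1) $L_1\subset K_1$ is a non-empty full sub-complex of $K_1$; (2) $\varphi:L_1\to K_2$ is a simplicial embedding; (3) the $1$-skeleton $\varphi(L_1)^{(1)}$ is a full sub-complex of the $1$-skeleton $K_2^{(1)}$. Then $K=K_1\sqcup_\varphi K_2$ is a flag complex. In particular, $K$ is a flag complex whenever both $L_1$ and $\varphi(L_1)$ are full sub-complexes of $K_1$ and $K_2$, respectively.
   Context: A simplicial complex is flag if every finite set of pairwise adjacent vertices spans a simplex. A sub-complex $L\subset K$ is full if every simplex of $K$ all of whose vertices lie in $L$ belongs to $L$. $K_1\sqcup_\varphi K_2$ denotes the complex obtained from the disjoint union $K_1\sqcup K_2$ by identifying each simplex $\sigma$ of $L_1$ with its image $\varphi(\sigma)$. *)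

From HB Require Import structures.
From mathcomp Require Import all_boot.
From mathcomp Require Import finmap.
From Stdlib Require Import ClassicalDescription.
Set Implicit Arguments. Unset Strict Implicit. Unset Printing Implicit Defensive.
Local Open Scope fset_scope.

(* An (abstract) simplicial complex on a vertex type V is given by the
   predicate of its simplices (finite sets of vertices), closed under
   taking subsets.  Vertices of K are the v with K [fset v]. *)
Definition complex (V : choiceType) := {fset V} -> Prop.

Definition is_complex (V : choiceType) (K : complex V) : Prop :=
  forall s t : {fset V}, K s -> t `<=` s -> K t.

(* flag: every non-empty finite set of pairwise adjacent vertices is a
   simplex (for x = y the hypothesis says x is a vertex). *)
Definition is_flag (V : choiceType) (K : complex V) : Prop :=
  forall s : {fset V}, s != fset0 ->
    (forall x y, x \in s -> y \in s -> K [fset x; y]) -> K s.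

Definition subcomplex (V : choiceType) (L K : complex V) : Prop :=
  is_complex L /\ forall s, L s -> K s.

Definition full_sub (V : choiceType) (L K : complex V) : Prop :=
  subcomplex L K /\
  forall s, K s -> (forall x, x \in s -> L [fset x]) -> L s.

Definition skeleton1 (V : choiceType) (K : complex V) : complex V :=
  fun s => K s /\ (#|` s| <= 2)%N.

Definition simplicial_embedding (V1 V2 : choiceType) (L : complex V1)
    (K2 : complex V2) (f : V1 -> V2) : Prop :=
  (forall s, L s -> K2 [fset f x | x in s]) /\
  (forall x y, L [fset x] -> L [fset y] -> f x = f y -> x = y).

Definition image_complex (V1 V2 : choiceType) (f : V1 -> V2)
    (L : complex V1) : complex V2 :=
  fun s => exists t, L t /\ s = [fset f x | x in t].

(* The glued complex K1 ⊔_f K2, on vertex type V1 + V2: a vertex v of L1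
   (i.e. inl v) is identified with inr (f v).  The representative map: *)
Definition glue_rep (V1 V2 : choiceType) (L1 : complex V1) (f : V1 -> V2)
    (z : V1 + V2) : V1 + V2 :=
  match z with
  | inl v => if excluded_middle_informative (L1 [fset v]) then inr (f v) else inl v
  | inr w => inr w
  end.

Definition glue (V1 V2 : choiceType) (K1 : complex V1) (K2 : complex V2)
    (L1 : complex V1) (f : V1 -> V2) : complex (V1 + V2)%type :=
  fun s =>
    (exists t, K1 t /\ s = [fset glue_rep L1 f (inl x) | x in t]) \/
    (exists t, K2 t /\ s = [fset (inr y : (V1 + V2)%type) | y in t]).

From mathcomp Require Import all_boot.
From mathcomp Require Import finmap.
From Stdlib Require Import ClassicalDescription Classical.
Set Implicit Arguments.
Unset Strict Implicit.
Unset Printing Implicit Defensive.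
Local Open Scope fset_scope.

(* Every edge of the glued complex is the image of an edge of K1 or of K2.  A
   set s of pairwise adjacent vertices either contains a vertex of K1 outside
   L1, or consists of vertices of K2 only.  In the first case every vertex of s
   is adjacent to that vertex, so s lifts to K1; its edges lift to edges of K1,
   because an edge of K2 joining two vertices of f(L1) is an edge of f(L1)
   (fullness of the 1-skeleton), and pulls back along f to an edge of L1.  In the second case the edges
   of s are edges of K2, since a simplex of K1 all of whose vertices lie in L1
   is a simplex of L1 (fullness of L1).  Flagness of K1, resp. K2, concludes. *)

Lemma fsub2set (T : choiceType) (x y : T) (t : {fset T}) :
  x \in t -> y \in t -> [fset x; y] `<=` t.
Proof. by move=> xt yt; rewrite fsubUset !fsub1set xt yt. Qed.

Lemma imfset_onto (U T : choiceType) (h : U -> T) (s : {fset T}) :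
  {in s, forall z, exists u, h u = z} -> exists t : {fset U}, s = h @` t.
Proof.
move=> hs; suff [t ht] : exists t : {fset U}, h @` t =i (s : seq T).
  by exists t; apply/fsetP => z; rewrite ht.
have : {subset (s : seq T) <= s} by [].
elim: (s : seq T) => [|z r IHr] rs; first by exists fset0 => z; rewrite imfset0 inE.
have [u <-] := hs z (rs z (mem_head _ _)).
have [t ht] := IHr (fun y yr => rs y (mem_behead (s := z :: r) yr)).
by exists (u |` t) => y; rewrite imfsetU1 !inE ht.
Qed.

Section Gluing.

Variables (V1 V2 : choiceType) (K1 : complex V1) (K2 : complex V2).
Variables (L1 : complex V1) (f : V1 -> V2).
Hypotheses (K1_complex : is_complex K1) (K2_complex : is_complex K2).
Hypothesis L1_full : full_sub L1 K1.
Hypothesis f_embedding : simplicial_embedding L1 K2 f.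

Local Notation rep u := (glue_rep L1 f (inl u)).
Local Notation glued := (glue K1 K2 L1 f).

Lemma glue_repP u :
  L1 [fset u] /\ rep u = inr (f u) \/ ~ L1 [fset u] /\ rep u = inl u.
Proof. by rewrite /glue_rep; case: excluded_middle_informative; [left | right]. Qed.

Lemma glue_rep_inr u w : rep u = inr w -> L1 [fset u] /\ w = f u.
Proof. by case: (glue_repP u) => -[Lu ->] // [<-]. Qed.

Lemma glue_rep_inj : injective (fun u => rep u).
Proof.
have [_ f_inj] := f_embedding.
move=> a b; case: (glue_repP a) => -[La ->]; case: (glue_repP b) => -[Lb ->] //.
- by case; apply: f_inj.
- by case.
Qed.

Lemma glue_edge_inl v z : glued [fset inl v; z] -> exists u, rep u = z.
Proof.
case=> [[t [_ e]]|[t [_ e]]].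
- have /imfsetP[u _ ->] : z \in [fset rep x | x in t] by rewrite -e fset22.
  by exists u.
- by have /imfsetP[] : inl v \in [fset inr y | y in t] by rewrite -e fset21.
Qed.

Lemma glue_edge_inr w1 w2 : glued [fset inr w1; inr w2] -> K2 [fset w1; w2].
Proof.
case=> [[t [Kt e]]|[t [Kt e]]].
- have Lt : L1 t.
    apply: L1_full.2 => // a ta.
    have : rep a \in [fset inr w1; inr w2] by rewrite e; apply: in_imfset.
    by case/fset2P => /glue_rep_inr[].
  have in_ft w : inr w \in [fset rep x | x in t] -> w \in [fset f x | x in t].
    by case/imfsetP => a ta /esym/glue_rep_inr[_ ->]; apply: in_imfset.
  apply: K2_complex (f_embedding.1 _ Lt) _.
  by apply: fsub2set; apply: in_ft; rewrite -e ?fset21 ?fset22.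
- have in_t w : (inr w : V1 + V2) \in [fset inr y | y in t] -> w \in t.
    by case/imfsetP => y yt [->].
  by apply: K2_complex Kt _; apply: fsub2set; apply: in_t; rewrite -e ?fset21 ?fset22.
Qed.

Section EdgeReflection.

Hypothesis edges_reflected : forall u1 u2, L1 [fset u1] -> L1 [fset u2] ->
  K2 [fset f u1; f u2] -> K1 [fset u1; u2].

Lemma glue_edge_rep a b : glued [fset rep a; rep b] -> K1 [fset a; b].
Proof.
case=> [[t [Kt e]]|[t [Kt e]]].
- have in_t u : rep u \in [fset rep x | x in t] -> u \in t.
    by case/imfsetP => x xt /glue_rep_inj ->.
  by apply: K1_complex Kt _; apply: fsub2set; apply: in_t; rewrite -e ?fset21 ?fset22.
- have in_t u : rep u \in [fset inr y | y in t] -> L1 [fset u] /\ f u \in t.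
    by case/imfsetP => y yt /glue_rep_inr[Lu <-].
  have /in_t[La fat] : rep a \in [fset inr y | y in t] by rewrite -e fset21.
  have /in_t[Lb fbt] : rep b \in [fset inr y | y in t] by rewrite -e fset22.
  by apply: edges_reflected => //; apply: K2_complex Kt _; apply: fsub2set.
Qed.

Lemma glue_flag : is_flag K1 -> is_flag K2 -> is_flag glued.
Proof.
move=> K1_flag K2_flag s s_neq0 s_edges.
have [[v vs]|no_inl] := classic (exists v, inl v \in s).
- have [t s_eq] : exists t : {fset V1}, s = [fset rep u | u in t].
    apply: (@imfset_onto _ _ (fun u => rep u)) => z zs.
    exact: glue_edge_inl (s_edges _ _ vs zs).
  left; exists t; split => //; apply: K1_flag.
  + by apply: contra_neq s_neq0 => t0; rewrite s_eq t0 imfset0.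
  + by move=> a b ta tb; apply/glue_edge_rep/s_edges; rewrite s_eq; apply: in_imfset.
- have [t s_eq] : exists t : {fset V2}, s = [fset inr w | w in t].
    apply: (@imfset_onto _ _ inr) => -[v|w] zs; last by exists w.
    by case: no_inl; exists v.
  right; exists t; split => //; apply: K2_flag.
  + by apply: contra_neq s_neq0 => t0; rewrite s_eq t0 imfset0.
  + by move=> a b ta tb; apply/glue_edge_inr/s_edges; rewrite s_eq; apply: in_imfset.
Qed.

End EdgeReflection.

Lemma image_edge_reflected u1 u2 : L1 [fset u1] -> L1 [fset u2] ->
  image_complex f L1 [fset f u1; f u2] -> K1 [fset u1; u2].
Proof.
have [[L1_complex L1_sub] _] := L1_full; have [_ f_inj] := f_embedding.
move=> Lu1 Lu2 [t [Lt et]].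
have in_t u : L1 [fset u] -> f u \in [fset f x | x in t] -> u \in t.
  move=> Lu /imfsetP[a ta fua].
  have La : L1 [fset a] by apply: L1_complex Lt _; rewrite fsub1set.
  by rewrite (f_inj _ _ Lu La fua).
apply: K1_complex (L1_sub _ Lt) _.
by apply: fsub2set; apply: in_t; rewrite // -et ?fset21 ?fset22.
Qed.

Lemma image_edge_vertices u1 u2 : L1 [fset u1] -> L1 [fset u2] ->
  {in [fset f u1; f u2], forall x, image_complex f L1 [fset x]}.
Proof.
by move=> Lu1 Lu2 x /fset2P[] ->; [exists [fset u1] | exists [fset u2]];
  rewrite imfset_fset1.
Qed.

End Gluing.

Theorem mainTheorem1 (V1 V2 : choiceType) (K1 : complex V1) (K2 : complex V2)
    (L1 : complex V1) (f : V1 -> V2) :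
  is_complex K1 -> is_complex K2 ->
  is_flag K1 -> is_flag K2 ->
  full_sub L1 K1 ->
  (exists s, s != fset0 /\ L1 s) ->
  simplicial_embedding L1 K2 f ->
  (full_sub (skeleton1 (image_complex f L1)) (skeleton1 K2) ->
     is_flag (glue K1 K2 L1 f)) /\
  (full_sub (image_complex f L1) K2 ->
     is_flag (glue K1 K2 L1 f)).
Proof.
move=> cK1 cK2 fK1 fK2 L1_full _ f_emb.
split=> image_full; apply: (glue_flag cK1 cK2 L1_full f_emb _ fK1 fK2) => u1 u2 Lu1 Lu2 K2e;
  apply: (image_edge_reflected cK1 L1_full f_emb) => //;
  have vertices := image_edge_vertices (f := f) Lu1 Lu2.
- have K2_edge : skeleton1 K2 [fset f u1; f u2] by rewrite /skeleton1 cardfs2 ltnS leq_b1.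
  have [] // := image_full.2 _ K2_edge.
  by move=> x /vertices; split; rewrite ?cardfs1.
- exact: image_full.2 _ K2e vertices.
Qed.
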